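(* Consider an instance $(S,C,T,\mathbf{p},\mathbf{c})$ of the value-dependent DFEP with binary tests ($\ell=2$), where $S$ contains objects of at least two distinct classes. Let $\tau\in T$ be a test minimizing $\max_{i\in\{1,2\}} \frac{c^i(t)}{P(S)-P(S^i_t)}$ over all $t\in T$ (the test chosen by \textsc{DividePairs} at the root), and let $q\in\{1,2\}$ be an index attaining $\max\{c^1(\tau)+Cost_W(S^1_\tau),\; c^2(\tau)+Cost_W(S^2_\tau)\}$, where $Cost_W(G)$ is the worst testing cost of the decision tree produced by \textsc{DividePairs} on $G$. Then $$OPT_W(S)\;\ge\; \frac{c^q(\tau)\,P(S)}{P(S)-P(S^q_\tau)}.$$
   Context: Value-dependent DFEP: $S$ is a finite set of $n$ objects partitioned into classes $C=\{C_1,\dots,C_m\}$; $\mathbf p$ is a probability distribution on $S$; $T$ is a set of tests $t:S\to\{1,\dots,\ell\}$, complete in the sense that any two distinct objects are distinguished by some test; each test $t$ has $\ell$ costs $c^1(t),\dots,c^\ell(t)\in\mathbb{Q}^+$, and applying $t$ to object $s$ costs $c^{t(s)}(t)$. For $G\subseteq S$, $G^i_t=\{s\in G: t(s)=i\}$. A decision tree for $G$ is a leaf labeled with a class if all objects of $G$ are in that class; otherwise its root is labeled with a test $t$ and its children are decision trees for the nonempty sets $G^i_t$. For an object $s$, $cost(D,s)$ is the sum of $c^{t(s)}(t)$ over the tests $t$ on the root-to-leaf path of $s$ in $D$; $cost_W(D)=\max_s cost(D,s)$, and $OPT_W(G)$ is the minimum of $cost_W(D)$ over decision trees $D$ for $G$.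 A pair of objects is separable if they lie in different classes; $P(G)$ is the number of separable pairs in $G$, i.e. $P(G)=\sum_{i<j} n_in_j$ where $n_i$ is the number of objects of $G$ in class $i$. A ratio with zero denominator is taken as $+\infty$. Algorithm \textsc{DividePairs} on a set $G$: if all objects of $G$ are in the same class, return a leaf; otherwise choose a test $t$ minimizing $\max_{1\le i\le\ell} c^i(t)/(P(G)-P(G^i_t))$, make it the root, and recursively build the subtrees for each nonempty $G^i_t$. *)

From mathcomp Require Import all_boot all_order all_algebra.
Set Implicit Arguments. Unset Strict Implicit. Unset Printing Implicit Defensive.
Import Order.TTheory GRing.Theory Num.Theory.
Local Open Scope ring_scope.

(* Objects: finType S; classes: finType K with class map cls : S -> K;
   tests: finType T with tst : T -> S -> bool (outcome true = "1", false = "2");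
   costs: c : T -> bool -> rat, c t b = cost of test t on an object with outcome b. *)

(* Decision trees: a node has one subtree per outcome (true-child, false-child).
   A subtree corresponding to an empty outcome set is irrelevant. *)
Inductive dtree (T K : Type) : Type :=
| Leaf of K
| Node of T & dtree T K & dtree T K.

Definition part (S T : finType) (tst : T -> S -> bool) (G : {set S}) (t : T) (b : bool)
  : {set S} := [set s in G | tst t s == b].

Definition in_class (S K : finType) (cls : S -> K) (G : {set S}) (k : K) : Prop :=
  forall s, s \in G -> cls s = k.

Definition single_class (S K : finType) (cls : S -> K) (G : {set S}) : Prop :=
  exists k, in_class cls G k.

Fixpoint is_dtree (S T K : finType) (cls : S -> K) (tst : T -> S -> bool)
  (G : {set S}) (D : dtree T K) : Prop :=
  match D with
  | Leaf k => in_class cls G k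
  | Node t D1 D2 =>
      ~ single_class cls G /\
      (part tst G t true != set0 -> is_dtree cls tst (part tst G t true) D1) /\
      (part tst G t false != set0 -> is_dtree cls tst (part tst G t false) D2)
  end.

Fixpoint cost (S T K : finType) (tst : T -> S -> bool) (c : T -> bool -> rat)
  (D : dtree T K) (s : S) : rat :=
  match D with
  | Leaf _ => 0
  | Node t D1 D2 => c t (tst t s) + cost tst c (if tst t s then D1 else D2) s
  end.

(* cost_W(D) over the objects of G (costs are nonnegative, so 0 is a neutral base) *)
Definition costW (S T K : finType) (tst : T -> S -> bool) (c : T -> bool -> rat)
  (G : {set S}) (D : dtree T K) : rat :=
  \big[Num.max/0]_(s in G) cost tst c D s.

(* P(G): number of unordered separable pairs = (number of ordered separable pairs)/2 *)
Definition npairs (S K : finType) (cls : S -> K) (G : {set S}) : nat :=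
  (#|[set xy : S * S | [&& xy.1 \in G, xy.2 \in G & cls xy.1 != cls xy.2]]|)./2.

(* Extended nonnegative rationals: None = +infinity *)
Definition ratio (a : rat) (d : nat) : option rat :=
  if d == 0%N then None else Some (a / d%:R).

Definition omax (x y : option rat) : option rat :=
  match x, y with
  | Some a, Some b => Some (Num.max a b)
  | _, _ => None
  end.

Definition ole (x y : option rat) : bool :=
  match x, y with
  | _, None => true
  | None, Some _ => false
  | Some a, Some b => a <= b
  end.

Definition score (S T K : finType) (cls : S -> K) (tst : T -> S -> bool)
  (c : T -> bool -> rat) (G : {set S}) (t : T) : option rat :=
  omax (ratio (c t true) (npairs cls G - npairs cls (part tst G t true)))
       (ratio (c t false) (npairs cls G - npairs cls (part tst G t false))).

(* D is a tree that DividePairs may output on G (for some tie-breaking rule) *)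
Inductive dp_tree (S T K : finType) (cls : S -> K) (tst : T -> S -> bool)
  (c : T -> bool -> rat) : {set S} -> dtree T K -> Prop :=
| dp_leaf G k : in_class cls G k -> dp_tree cls tst c G (Leaf T k)
| dp_node G t D1 D2 :
    ~ single_class cls G ->
    (forall t', ole (score cls tst c G t) (score cls tst c G t')) ->
    (part tst G t true != set0 -> dp_tree cls tst c (part tst G t true) D1) ->
    (part tst G t false != set0 -> dp_tree cls tst c (part tst G t false) D2) ->
    dp_tree cls tst c G (Node t D1 D2).

From Pilot Require Import Defs.
From mathcomp Require Import all_boot all_order all_algebra.
Import Order.TTheory GRing.Theory Num.Theory.
Local Open Scope ring_scope.
Set Implicit Arguments. Unset Strict Implicit.

(* Let r := c^q(tau) / (P(S) - P(S^q_tau)).  The greedy choice of tau says that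
   no test t separates pairs more cheaply: for some outcome i,
   r (P(S) - P(S^i_t)) <= c^i(t).  Along the path of any decision tree, always
   following such an outcome, the number of pairs separated by a test on G is
   at most the number it separates on S, so the cost paid on that path is at
   least r times the number of pairs still separable; summed down to a leaf,
   where no pair is left, this gives cost >= r P(S).  Neither the choice of q,
   nor the subtrees built by DividePairs, nor the probabilities play any role. *)

Lemma card_sym_pairs (T : finType) (R : rel T) :
  irreflexive R -> symmetric R ->
  #|[set xy : T * T | R xy.1 xy.2]|
  = (#|[set xy : T * T | R xy.1 xy.2 & (enum_rank xy.1 < enum_rank xy.2)%N]|).*2.
Proof.
move=> Rirr Rsym.
set A := [set xy : T * T | R xy.1 xy.2].
set B := [set xy : T * T | (enum_rank xy.1 < enum_rank xy.2)%N].
have AIB : [set xy : T * T | R xy.1 xy.2 & (enum_rank xy.1 < enum_rank xy.2)%N]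
           = A :&: B by apply/setP => xy; rewrite !inE.
have swap_inj : injective (fun xy : T * T => (xy.2, xy.1)) by move=> [? ?] [? ?] [-> ->].
have ADB : A :\: B = (fun xy : T * T => (xy.2, xy.1)) @^-1: (A :&: B).
  apply/setP => -[x y]; rewrite !inE /= Rsym andbC [RHS]andbC.
  case Ryx: (R y x); rewrite ?andbF ?andbT // -leqNgt leq_eqVlt.
  have /negbTE-> // : enum_rank y != enum_rank x :> nat.
  by apply: contraTneq Ryx => /val_inj/enum_rank_inj->; rewrite Rirr.
by rewrite -(cardsID B A) ADB card_preimset // AIB addnn.
Qed.

Section SeparablePairs.

Variables (S K : finType) (cls : S -> K).
Implicit Types G H X : {set S}.

Definition separable (G : {set S}) : rel S :=
  fun x y => [&& x \in G, y \in G & cls x != cls y].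

Definition sep_pairs (G : {set S}) : {set S * S} :=
  [set xy : S * S | separable G xy.1 xy.2 & (enum_rank xy.1 < enum_rank xy.2)%N].

Lemma npairsE G : npairs cls G = #|sep_pairs G|.
Proof.
rewrite /npairs (card_sym_pairs (R := separable G)) ?doubleK //.
  by move=> x; rewrite /separable eqxx !andbF.
by move=> x y; rewrite /separable eq_sym andbCA.
Qed.

Lemma sep_pairsS G H : G \subset H -> sep_pairs G \subset sep_pairs H.
Proof.
move=> sGH; apply/subsetP => -[x y]; rewrite !inE /separable /=.
by case/andP => /and3P[/(subsetP sGH)-> /(subsetP sGH)-> ->].
Qed.

Lemma npairsS G H : G \subset H -> (npairs cls G <= npairs cls H)%N.
Proof. by move=> sGH; rewrite !npairsE subset_leq_card ?sep_pairsS. Qed.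

Lemma npairs_single_class G : single_class cls G -> npairs cls G = 0%N.
Proof.
case=> k Gk; rewrite npairsE; apply/eqP; rewrite cards_eq0; apply/eqP/setP => -[x y].
rewrite !inE /separable /=; apply/negP => /andP[/and3P[Gx Gy]].
by rewrite (Gk x Gx) (Gk y Gy) eqxx.
Qed.

(* The pairs of G split by X (those not surviving in G :&: X) are among those of H. *)
Lemma leq_npairsB_setI G H X : G \subset H ->
  (npairs cls G - npairs cls (G :&: X) <= npairs cls H - npairs cls (H :&: X))%N.
Proof.
move=> sGH; rewrite !npairsE.
have cardB G' : (#|sep_pairs G'| - #|sep_pairs (G' :&: X)|)%N
                = #|sep_pairs G' :\: sep_pairs (G' :&: X)|.
  by rewrite cardsD (setIidPr (sep_pairsS (subsetIl G' X))).
rewrite !cardB subset_leq_card //; apply/subsetP => -[x y].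
rewrite !inE /separable /= !inE.
case/andP => + /andP[/and3P[Gx Gy clsxy] lt_xy].
by rewrite Gx Gy clsxy lt_xy (subsetP sGH x Gx) (subsetP sGH y Gy) !andbT.
Qed.

End SeparablePairs.

Lemma partE (S T : finType) (tst : T -> S -> bool) (G : {set S}) t b :
  part tst G t b = G :&: [set s | tst t s == b].
Proof. by apply/setP => s; rewrite !inE. Qed.

Lemma part_sub (S T : finType) (tst : T -> S -> bool) (G : {set S}) t b :
  part tst G t b \subset G.
Proof. by rewrite partE subsetIl. Qed.

Lemma part_full (S T : finType) (tst : T -> S -> bool) (G : {set S}) t b :
  part tst G t (~~ b) = set0 -> part tst G t b = G.
Proof.
move=> /setP empty; apply/setP => s; rewrite inE.
case Gs: (s \in G) => //=.
by have := empty s; rewrite !inE Gs; case: (tst t s); case: (b).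
Qed.

Section CostLowerBound.

Variables (S T K : finType) (cls : S -> K) (tst : T -> S -> bool).
Variables (c : T -> bool -> rat) (r : rat).
Hypotheses (c_ge0 : forall t b, 0 <= c t b) (r_ge0 : 0 <= r).

Definition pair_price_lb : Prop :=
  forall t, exists i : bool,
    r * (npairs cls [set: S] - npairs cls (part tst [set: S] t i))%:R <= c t i.

Hypothesis r_lb : pair_price_lb.

Lemma exists_cost_ge_npairs (D : dtree T K) (G : {set S}) :
  is_dtree cls tst G D -> G != set0 ->
  exists2 s, s \in G & r * (npairs cls G)%:R <= cost tst c D s.
Proof.
elim: D G => [k|t D1 IH1 D2 IH2] G /=.
  move=> Gk /set0Pn[s Gs]; exists s => //.
  by rewrite npairs_single_class ?mulr0 //; exists k.
case=> _ [sub1 sub2] G0.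
pose Db (b : bool) := if b then D1 else D2.
have IH b : part tst G t b != set0 -> exists2 s, s \in part tst G t b &
    r * (npairs cls (part tst G t b))%:R <= cost tst c (Db b) s.
  by case: b => Gb0; [apply: IH1 (sub1 Gb0) Gb0 | apply: IH2 (sub2 Gb0) Gb0].
have follow b : part tst G t b != set0 ->
    r * (npairs cls G - npairs cls (part tst G t b))%:R <= c t b ->
    exists2 s, s \in G & r * (npairs cls G)%:R <= cost tst c (Node t D1 D2) s.
  move=> Gb0 price; have [s] := IH b Gb0; rewrite inE => /andP[Gs /eqP tsb] costs.
  exists s => //=; rewrite tsb -/(Db b).
  by rewrite -(subnK (npairsS cls (part_sub tst G t b))) natrD mulrDr lerD.
have [i price] := r_lb t.
have price_G : r * (npairs cls G - npairs cls (part tst G t i))%:R <= c t i.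
  apply: le_trans price; rewrite ler_wpM2l // ler_nat !partE.
  exact/leq_npairsB_setI/subsetT.
have [Gi0|Gi0] := eqVneq (part tst G t i) set0; last exact: follow price_G.
(* If branch i is empty, t separates no pair of G and branch ~~ i is free. *)
apply: (follow (~~ i)); rewrite part_full ?negbK //.
by rewrite subnn mulr0.
Qed.

Lemma costW_ge_npairs (D : dtree T K) :
  is_dtree cls tst [set: S] D -> [set: S] != set0 ->
  r * (npairs cls [set: S])%:R <= costW tst c [set: S] D.
Proof.
move=> hD S0; have [s Ss /le_trans] := exists_cost_ge_npairs hD S0.
by apply; exact: le_bigmax_cond.
Qed.

End CostLowerBound.

Lemma ole_omax_ratio (a b : bool -> rat) (n m : bool -> nat) (q : bool) :
  (forall i, 0 <= b i) ->
  ole (omax (Defs.ratio (a true) (n true)) (Defs.ratio (a false) (n false)))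
      (omax (Defs.ratio (b true) (m true)) (Defs.ratio (b false) (m false))) ->
  exists i : bool, a q / (n q)%:R * (m i)%:R <= b i.
Proof.
(* When n q = 0 the quotient is the junk value 0. *)
move=> b_ge0; have [nq0|nq0] := eqVneq (n q) 0%N.
  by exists true; rewrite nq0 invr0 mulr0 mul0r.
have [mt0|mt0] := eqVneq (m true) 0%N; first by exists true; rewrite mt0 mulr0.
have [mf0|mf0] := eqVneq (m false) 0%N; first by exists false; rewrite mf0 mulr0.
have m_gt0 i : (0 < (m i)%:R :> rat) by rewrite ltr0n lt0n; case: i.
rewrite /Defs.ratio (negbTE mt0) (negbTE mf0).
case: q nq0 => /negbTE nq0; rewrite nq0; case: eqP => _ //=; rewrite ge_max !le_max.
  by case/andP => /orP[h|h] _; [exists true | exists false]; rewrite -ler_pdivlMr.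
by case/andP => _ /orP[h|h]; [exists true | exists false]; rewrite -ler_pdivlMr.
Qed.

Lemma pair_price_lb_argmin_score (S T K : finType) (cls : S -> K)
    (tst : T -> S -> bool) (c : T -> bool -> rat) (tau : T) (q : bool) :
  (forall t b, 0 <= c t b) ->
  (forall t, ole (score cls tst c [set: S] tau) (score cls tst c [set: S] t)) ->
  pair_price_lb cls tst c
    (c tau q / (npairs cls [set: S] - npairs cls (part tst [set: S] tau q))%:R).
Proof.
move=> c_ge0 htau t.
pose gain u b := (npairs cls [set: S] - npairs cls (part tst [set: S] u b))%N.
exact: (@ole_omax_ratio (c tau) (c t) (gain tau) (gain t) q (c_ge0 t) (htau t)).
Qed.

Unset Implicit Arguments.

Theorem lemma1 (S T K : finType) (cls : S -> K) (p : S -> rat)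
  (tst : T -> S -> bool) (c : T -> bool -> rat)
  (hp0 : forall s, 0 <= p s) (hp1 : \sum_(s : S) p s = 1)
  (hc : forall t b, 0 < c t b)
  (hcomplete : forall x y : S, x != y -> exists t, tst t x != tst t y)
  (h2 : exists x y : S, cls x != cls y)
  (tau : T)
  (htau : forall t, ole (score cls tst c [set: S] tau) (score cls tst c [set: S] t))
  (Dch : bool -> dtree T K)
  (hDch : forall i, dp_tree cls tst c (part tst [set: S] tau i) (Dch i))
  (q : bool)
  (hq : forall i, c tau i + costW tst c (part tst [set: S] tau i) (Dch i)
                  <= c tau q + costW tst c (part tst [set: S] tau q) (Dch q)) :
  forall D : dtree T K, is_dtree cls tst [set: S] D ->
    c tau q * (npairs cls [set: S])%:R
      / ((npairs cls [set: S])%:R - (npairs cls (part tst [set: S] tau q))%:R)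
    <= costW tst c [set: S] D.
Proof.
move=> D hD.
have c_ge0 t b : 0 <= c t b by exact: ltW.
have S0 : [set: S] != set0 by case: h2 => x _; apply/set0Pn; exists x.
rewrite -natrB ?npairsS ?part_sub // mulrAC.
apply: costW_ge_npairs hD S0 => //; last exact: pair_price_lb_argmin_score.
by rewrite divr_ge0 ?ler0n.
Qed.
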